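(* Let $\nu$ be a Borel probability measure on $\mathbb{R}^d$. Assume that $r>0$ and $\lambda_1,\dots,\lambda_d,M\ge1$. Then $$\nu\big(\{x:\ \nu(D(x,\lambda_1r,\dots,\lambda_dr))\ge M\,\nu(D(x,r))\}\big)\le 4^dM^{-1}\lambda_1\cdots\lambda_d.$$
   Context: For $x\in\mathbb{R}^d$ and $h_1,\dots,h_d\ge0$, $D(x,h_1,\dots,h_d)=\prod_{i=1}^d[x_i-h_i,x_i+h_i]$, and $D(x,r)=D(x,r,\dots,r)$. *)

From HB Require Import structures.
From mathcomp Require Import all_boot all_order all_algebra.
From mathcomp Require Import all_classical all_reals all_analysis.
Set Implicit Arguments. Unset Strict Implicit. Unset Printing Implicit Defensive.
Import Order.TTheory GRing.Theory Num.Theory.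
Local Open Scope classical_set_scope.
Local Open Scope ring_scope.

(* R^d is modelled as d.-tuple R, equipped (by mathcomp-analysis) with the
   product sigma-algebra of the Borel sigma-algebras on R, which is the Borel
   sigma-algebra of R^d. *)

Definition box (R : realType) (d : nat) (x : d.-tuple R) (h : 'I_d -> R)
  : set (d.-tuple R) :=
  [set y | forall i : 'I_d, x`_i - h i <= y`_i <= x`_i + h i].

Definition cube (R : realType) (d : nat) (x : d.-tuple R) (r : R)
  : set (d.-tuple R) := box x (fun _ => r).

From HB Require Import structures.
From mathcomp Require Import all_boot all_order all_algebra.
From mathcomp Require Import all_classical all_reals all_analysis.
From mathcomp Require Import measurable_realfun lra.
Set Implicit Arguments. Unset Strict Implicit.
Import Order.TTheory GRing.Theory Num.Theory.
Local Open Scope classical_set_scope.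
Local Open Scope ring_scope.

(* Tile the cube ]-Nr, Nr[^d by the (2N)^d half-open grid cells C_k of side r,
   and pick in every cell meeting the set E of the statement a point x_k of E.
   As C_k is contained in D(x_k, r), nu(E & C_k) <= nu(D(x_k, lam r)) / M.
   A point y lies in D(x_k, lam r) only if each index k_i lies in a window of
   length 2 lam_i + 1, so at most prod_i (2 lam_i + 2) <= 4^d prod_i lam_i of
   these boxes overlap at y; integrating the overlap count against the
   probability nu bounds sum_k nu(D(x_k, lam r)) by that product.  Letting N
   go to infinity gives the bound for E. *)

Section MeasureBounds.
Context d (T : measurableType d) (R : realType) (mu : measure T R).

Lemma sum_measure_le_overlap (I : finType) (G : I -> set T) (C : R) :
  (forall k, measurable (G k)) -> (forall y, \sum_k \1_(G k) y <= C) ->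
  (\sum_k mu (G k) <= C%:E * mu setT)%E.
Proof.
move=> mG overlapC.
have mind k : measurable_fun setT (fun y => ((\1_(G k) y)%:E : \bar R)).
  exact/measurable_EFinP/measurable_indic.
rewrite (eq_bigr (fun k => \int[mu]_(y in setT) (\1_(G k) y)%:E)%E); last first.
  by move=> k _; rewrite integral_indic ?setIT.
rewrite -ge0_integral_sum // -integral_cst //.
apply: ge0_le_integral => //.
- by move=> y _; apply: sume_ge0.
- exact: emeasurable_sum.
- by move=> y _; rewrite sumEFin lee_fin.
Qed.

Lemma measure_le_sum_cover (I : finType) (A : set T) (F : I -> set T) :
  measurable A -> (forall k, measurable (F k)) -> A `<=` \bigcup_k F k ->
  (mu A <= \sum_k mu (F k))%E.
Proof.
move=> mA mF AF.
have := content_sub_fsum mu finite_finset (fun k _ => mF k) mA AF.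
rewrite (fsbigE (index_enum _)) ?index_enum_uniq //; last by move=> k _; rewrite mem_index_enum.
by under eq_bigl do rewrite in_setT.
Qed.

Lemma measure_le_nondecreasing_cover (A : set T) (F : nat -> set T) (c : \bar R) :
  measurable A -> (forall N, measurable (F N)) -> nondecreasing_seq F ->
  A `<=` \bigcup_N F N -> (forall N, mu (A `&` F N) <= c)%E -> (mu A <= c)%E.
Proof.
move=> mA mF ndF AF muAF.
have UAF : \bigcup_N (A `&` F N) = A.
  by rewrite -setI_bigcupr; apply/setIidPl.
have ndAF : nondecreasing_seq (fun N => A `&` F N).
  by move=> m n /ndF/subsetPset FmFn; apply/subsetPset; exact: setIS.
have mUAF : measurable (\bigcup_N (A `&` F N)) by rewrite UAF.
have cvAF := nondecreasing_cvg_mu (mu := mu) (fun N => measurableI _ _ mA (mF N)) mUAF ndAF.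
rewrite UAF in cvAF; rewrite -(cvg_lim _ cvAF) //.
by apply: lime_le; [exact: cvgP cvAF | exact: nearW].
Qed.

End MeasureBounds.

Section TupleBoxes.
Context (R : realType) (d : nat).
Local Notation T := (d.-tuple R).

Lemma measurable_nth_tuple (i : 'I_d) : measurable_fun setT (fun y : T => y`_i).
Proof.
rewrite (_ : (fun y : T => y`_i) = @tnth d R ^~ i); first exact: measurable_tnth.
by apply: funext => y; rewrite (tnth_nth 0).
Qed.

Lemma measurable_tuple_itv (I : 'I_d -> interval R) :
  measurable [set y : T | forall i : 'I_d, y`_i \in I i].
Proof.
rewrite (_ : [set y | _] = \bigcap_(i in [set: 'I_d]) ((fun y : T => y`_i) @^-1` [set` I i])).
  apply: fin_bigcap_measurable => [|i _]; first exact: finite_finset.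
  by rewrite -[X in measurable X]setTI; exact: measurable_nth_tuple.
by apply/seteqP; split => [y yI i _ | y yI i]; [exact: yI | exact: yI].
Qed.

Lemma box_itv (x : T) (h : 'I_d -> R) :
  box x h = [set y | forall i : 'I_d, y`_i \in `[x`_i - h i, x`_i + h i]].
Proof. by apply/seteqP; split => y yx i; have := yx i; rewrite in_itv. Qed.

Lemma measurable_box (x : T) (h : 'I_d -> R) : measurable (box x h).
Proof. by rewrite box_itv; exact: measurable_tuple_itv. Qed.

Lemma measurable_fun_measure_box (mu : {sigma_finite_measure set T -> \bar R})
    (h : 'I_d -> R) :
  measurable_fun setT (fun x => mu (box x h)).
Proof.
pose A := [set p : T * T | forall i : 'I_d, p.2`_i - p.1`_i \in `[- h i, h i]].
have mA : measurable A.
  rewrite (_ : A = \bigcap_(i in [set: 'I_d])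
      ((fun p : T * T => p.2`_i - p.1`_i) @^-1` `[- h i, h i])).
    apply: fin_bigcap_measurable => [|i _]; first exact: finite_finset.
    rewrite -[X in measurable X]setTI; apply: measurable_funB => //.
      exact: measurableT_comp (measurable_nth_tuple i) measurable_snd.
    exact: measurableT_comp (measurable_nth_tuple i) measurable_fst.
  by apply/seteqP; split => [p pA i _ | p pA i]; [exact: pA | exact: pA].
apply: eq_measurable_fun (measurable_fun_xsection mu mA) => x _ /=.
congr (mu _); apply/seteqP; split => y; rewrite /xsection /= in_setE /= => yx i;
  by have := yx i; rewrite !in_itv /= => /andP[? ?]; apply/andP; split; lra.
Qed.

End TupleBoxes.

Section OpenCubes.
Context (R : realType) (d : nat).
Local Notation T := (d.-tuple R).

Definition open_cube0 (s : R) : set T := [set y | forall i : 'I_d, `|y`_i| < s].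

Lemma measurable_open_cube0 s : measurable (open_cube0 s).
Proof.
rewrite (_ : open_cube0 s = [set y | forall i : 'I_d, y`_i \in `]- s, s[]).
  exact: measurable_tuple_itv.
by apply/seteqP; split => y ys i; have := ys i; rewrite in_itv /= ltr_norml.
Qed.

Lemma open_cube0_le s s' : s <= s' -> open_cube0 s `<=` open_cube0 s'.
Proof. by move=> ss' y ys i; exact: lt_le_trans (ys i) ss'. Qed.

Lemma bigcup_open_cube0 (r : R) : 0 < r -> \bigcup_N open_cube0 (N%:R * r) = setT.
Proof.
move=> r_gt0; apply/seteqP; split => // y _.
exists (\sum_(i < d) Num.truncn (`|y`_i| / r)%R).+1 => // i.
rewrite -ltr_pdivrMr // -truncn_lt_nat ?divr_ge0 ?normr_ge0 ?ltW // ltnS.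
by rewrite (bigD1 i) //= leq_addr.
Qed.

End OpenCubes.

Lemma card_ord_window (R : realType) (n : nat) (a L : R) : 0 <= L ->
  #|[set j : 'I_n | a < j%:R <= a + L]%SET|%:R <= L + 1.
Proof.
move=> L0; set m := Num.truncn (a + 1); set c := Num.truncn L.
have window_iota (j : 'I_n) : a < j%:R <= a + L -> val j \in iota m c.+1.
  move=> /andP[aj jaL]; rewrite mem_iota; apply/andP; split.
    by rewrite truncn_le_nat -natr1 ltrD2r.
  rewrite -(ltr_nat R) natrD -!natr1.
  by have := truncnS_gt (a + 1); have := truncnS_gt L; rewrite -!natr1; lra.
apply: (@le_trans _ _ c.+1%:R); last by rewrite -natr1 lerD2r truncn_le.
rewrite ler_nat cardE -(size_map val) -[X in (_ <= X)%N](size_iota m).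
apply: uniq_leq_size; first by rewrite (map_inj_uniq val_inj) enum_uniq.
by move=> _ /mapP[j + ->]; rewrite mem_enum inE; exact: window_iota.
Qed.

Section Grid.
Context (R : realType) (d N : nat) (r : R).
Hypothesis r_gt0 : 0 < r.
Local Notation T := (d.-tuple R).
Local Notation index := {ffun 'I_d -> 'I_(N + N)}.

Definition grid_interval (j : nat) : interval R :=
  `[(j%:R - N%:R) * r, (j%:R - N%:R + 1) * r[.

Definition grid_cell (k : index) : set T :=
  [set y | forall i : 'I_d, y`_i \in grid_interval (k i)].

Definition grid_corner (k : index) : T := [tuple ((k i)%:R - N%:R) * r | i < d].

Lemma grid_corner_in_cell k : grid_cell k (grid_corner k).
Proof.
move=> i; rewrite nth_mktuple in_itv /= lexx /=.
by rewrite ltr_pM2r // ltrDl.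
Qed.

Lemma grid_cell_sub_cube k x : grid_cell k x -> grid_cell k `<=` cube x r.
Proof.
move=> kx y ky i; move: (kx i) (ky i); rewrite !in_itv /= !(mulrDl _ 1) mul1r.
by move=> /andP[? ?] /andP[? ?]; apply/andP; split; lra.
Qed.

Lemma grid_interval_cover t : `|t| < N%:R * r ->
  exists j : 'I_(N + N), t \in grid_interval j.
Proof.
rewrite ltr_norml => /andP[tNr tNr'].
set u := t / r + N%:R.
have tu : t = (u - N%:R) * r by rewrite addrK divfK ?gt_eqF.
have u_ge0 : 0 <= u by rewrite -(ler_pM2r r_gt0) mul0r mulrDl divfK ?gt_eqF //; lra.
have jN : (Num.truncn u < N + N)%N.
  by rewrite truncn_lt_nat // natrD -ltrBlDr addrK ltr_pdivrMr.
exists (Ordinal jN); have /andP[ul uu] := truncn_itv u_ge0.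
rewrite -natr1 in uu; rewrite in_itv /= tu ler_pM2r // ltr_pM2r //; apply/andP; split; lra.
Qed.

Lemma grid_cover (s : R) : s <= N%:R * r ->
  [set y : T | forall i : 'I_d, `|y`_i| < s] `<=` \bigcup_k grid_cell k.
Proof.
move=> sNr y ys.
have /choice[j yj] : forall i : 'I_d, exists j : 'I_(N + N), y`_i \in grid_interval j.
  by move=> i; apply: grid_interval_cover; exact: lt_le_trans (ys i) sNr.
by exists (finfun j) => // i; rewrite ffunE.
Qed.

Lemma grid_interval_window (j : nat) (lam t s : R) :
  t \in grid_interval j -> t - lam * r <= s <= t + lam * r ->
  (s - lam * r) / r + N%:R - 1 < j%:R <= (s - lam * r) / r + N%:R - 1 + (2 * lam + 1).
Proof.
rewrite in_itv /= => /andP[tl tu] /andP[sl su].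
have : s - lam * r = (s - lam * r) / r * r by rewrite divfK // gt_eqF.
move: ((s - lam * r) / r) => w sw.
apply/andP; split; nra.
Qed.

Lemma grid_overlap (lam : 'I_d -> R) (x : index -> T) :
  (forall i, 0 <= lam i) -> (forall k, grid_cell k (x k)) ->
  forall y, \sum_k \1_(box (x k) (fun i => lam i * r)) y <= \prod_i (2 * lam i + 2).
Proof.
move=> lam_ge0 xk y.
pose a (i : 'I_d) := (y`_i - lam i * r) / r + N%:R - 1.
pose J (i : 'I_d) := [set j : 'I_(N + N) | a i < j%:R <= a i + (2 * lam i + 1)]%SET.
apply: (@le_trans _ _ (#|setXn J|%:R : R)).
  rewrite -sum1_card natr_sum [X in _ <= X]big_mkcond /=; apply: ler_sum => k _.
  rewrite indicE; case: (boolP (y \in _)) => [|_]; last by case: ifP.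
  rewrite in_setE => yk; rewrite ifT //; apply/setXnP => i; rewrite inE.
  exact: grid_interval_window (xk k i) (yk i).
rewrite cardsXn natr_prod; apply: ler_prod => i _; rewrite ler0n /=.
rewrite (_ : 2 * lam i + 2 = 2 * lam i + 1 + 1); last by rewrite -addrA.
apply: card_ord_window; have := lam_ge0 i; lra.
Qed.

End Grid.

Section GrowthSet.
Context (R : realType) (d : nat) (nu : probability (d.-tuple R) R).
Variables (r : R) (lam : 'I_d -> R) (M : R).
Hypotheses (r_gt0 : 0 < r) (lam_ge1 : forall i, 1 <= lam i) (M_ge1 : 1 <= M).
Local Notation T := (d.-tuple R).
Local Notation B x := (box x (fun i => lam i * r)).

Let E := [set x : T | (M%:E * nu (cube x r) <= nu (B x))%E].

Let measurable_E : measurable E.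
Proof.
rewrite -[E]setTI; apply: measurable_lee => //.
  by apply: measurable_funeM; exact: measurable_fun_measure_box.
exact: measurable_fun_measure_box.
Qed.

Let M_gt0 : 0 < M. Proof. exact: lt_le_trans ltr01 M_ge1. Qed.

Section FixedGrid.
Variable N : nat.
Local Notation index := {ffun 'I_d -> 'I_(N + N)}.
Local Notation cell := (@grid_cell R d N r).

Let point (k : index) : T := xget (grid_corner r k) (E `&` cell k).

Let point_in_cell k : cell k (point k).
Proof.
rewrite /point; case: xgetP => [x -> []//|_].
exact: (grid_corner_in_cell r_gt0 k).
Qed.

Let measure_E_cell_le k : (nu (E `&` cell k) <= (M^-1)%:E * nu (B (point k)))%E.
Proof.
have [[x Ex]|noE] := pselect (exists x, (E `&` cell k) x); last first.
  rewrite (_ : E `&` cell k = set0) ?measure0; last first.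
    by apply/seteqP; split => // y Ey; apply: noE; exists y.
  by rewrite mule_ge0 // lee_fin invr_ge0 ltW.
have [Ek kk] : (E `&` cell k) (point k) by apply: xgetPex; exists x.
have mcell : measurable (cell k) by exact: measurable_tuple_itv.
apply: (@le_trans _ _ (nu (cube (point k) r))).
  apply: le_measure; rewrite ?inE; [exact: measurableI | exact: measurable_box |].
  by move=> y [_ yk]; exact: grid_cell_sub_cube kk _ yk.
by rewrite lee_pdivlMl.
Qed.

Lemma measure_growth_set_open_cube0_le :
  (nu (E `&` open_cube0 (N%:R * r)) <= (M^-1 * \prod_i (2 * lam i + 2))%:E)%E.
Proof.
apply: (@le_trans _ _ (\sum_(k : index) nu (E `&` cell k))%E).
  apply: measure_le_sum_cover => [|k|y [Ey /(grid_cover r_gt0 (lexx _))[k _ yk]]].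
  - exact: measurableI measurable_E (measurable_open_cube0 _).
  - exact: measurableI measurable_E (measurable_tuple_itv _).
  - by exists k.
apply: (@le_trans _ _ (\sum_(k : index) (M^-1)%:E * nu (B (point k)))%E).
  by apply: lee_sum => k _; exact: measure_E_cell_le.
rewrite -ge0_sume_distrr // EFinM; apply: lee_wpmul2l.
  by rewrite lee_fin invr_ge0 ltW.
have overlap := grid_overlap r_gt0 (fun i => le_trans ler01 (lam_ge1 i)) point_in_cell.
apply: le_trans (sum_measure_le_overlap nu (fun k => measurable_box _ _) overlap) _.
by rewrite [X in (_ * X)%E]probability_setT mule1.
Qed.

End FixedGrid.

Lemma measure_growth_set_le :
  (nu E <= (M^-1 * \prod_i (2 * lam i + 2))%:E)%E.
Proof.
apply: (measure_le_nondecreasing_cover (F := fun N => open_cube0 (N%:R * r))) => //.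
- by move=> N; exact: measurable_open_cube0.
- move=> m n mn; apply/subsetPset/open_cube0_le.
  by rewrite ler_pM2r // ler_nat.
- by rewrite bigcup_open_cube0.
- exact: measure_growth_set_open_cube0_le.
Qed.

End GrowthSet.

Theorem lemma4p2 (R : realType) (d : nat)
  (nu : probability (d.-tuple R) R)
  (r : R) (lam : 'I_d -> R) (M : R) :
  0 < r -> (forall i, 1 <= lam i) -> 1 <= M ->
  (nu [set x | (M%:E * nu (cube x r) <= nu (box x (fun i => (lam i * r)%R)))%E]
    <= ((4 ^+ d) * M^-1 * \prod_(i < d) lam i)%:E)%E.
Proof.
move=> r_gt0 lam_ge1 M_ge1.
apply: le_trans (measure_growth_set_le nu r_gt0 lam_ge1 M_ge1) _.
rewrite lee_fin -mulrA mulrCA ler_wpM2l ?invr_ge0 ?(le_trans ler01) //.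
rewrite (_ : 4 ^+ d = \prod_(i < d) 4); last by rewrite prodr_const card_ord.
rewrite -big_split /=.
by apply: ler_prod => i _; have := lam_ge1 i; lra.
Qed.
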